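(* Suppose $r\neq0$ and $r+s=0$. Then the Leonard pair $L,L^*+\frac{r-d}{2}$ on $\mathcal P_d(\mathbb R)$ is dual almost bipartite.
   Context: Fix an integer $d\ge0$ and $r,s\in(-1,\infty)$. Write $(x)_i=x(x+1)\cdots(x+i-1)$, $(x)_0=1$. For $0\le i\le d$ put $\theta_i=(d-i)(d-i+r+s+1)$ (distinct) and $\theta^*_i=i$. Put $b^*_i=\frac{(d-i)(i-d-s)(2d-2i+r+s+2)_i}{(2d-2i+r+s)_{i+1}}$ ($0\le i\le d-1$), $c^*_i=\frac{i(i-d-r-1)(d-i+r+s+1)_{d-i}}{(d-i+r+s+2)_{d-i+1}}$ ($1\le i\le d$), $b^*_d=c^*_0=0$, and $a^*_i=\theta^*_0-b^*_i-c^*_i$. Let $\mathcal P_d(\mathbb R)$ be the real polynomials of degree at most $d$, each determined by its values at $\theta_0,\dots,\theta_d$. Let $L,L^*$ be the linear maps on $\mathcal P_d(\mathbb R)$ with $(Lf)(\theta_i)=\theta_i f(\theta_i)$ and $(L^*f)(\theta_i)=b^*_i f(\theta_{i+1})+a^*_i f(\theta_i)+c^*_i f(\theta_{i-1})$ ($0\le i\le d$; terms with coefficient $b^*_d$ or $c^*_0$ omitted); a scalar stands for that scalar times the identity. A square matrix is irreducible tridiagonal if its nonzero entries lie on the diagonal, subdiagonal or superdiagonal and all subdiagonal and superdiagonal entries are nonzero. A Leonard pair on a nonzero finite-dimensional vector space $V$ is an ordered pair $A,A^*$ of linear maps on $V$ such that there is an ordered basis in which $A$ is diagonal and $A^*$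 is irreducible tridiagonal, and there is an ordered basis in which $A^*$ is diagonal and $A$ is irreducible tridiagonal. A Leonard pair $A,A^*$ on $V$ is almost bipartite if there is an ordered basis of $V$ in which $A^*$ is diagonal and $A$ is irreducible tridiagonal with all diagonal entries except the last one equal to zero; it is dual almost bipartite if $A^*,A$ is almost bipartite, i.e. there is an ordered basis in which $A$ is diagonal and $A^*$ is irreducible tridiagonal with all diagonal entries except the last one equal to zero. *)

From HB Require Import structures.
From mathcomp Require Import all_boot all_order all_algebra.
Set Implicit Arguments. Unset Strict Implicit. Unset Printing Implicit Defensive.
Import Order.TTheory GRing.Theory Num.Theory.
Local Open Scope ring_scope.

Section LP.
Variables (K : fieldType) (V : vectType K).

Definition mat_of n (e : n.-tuple V) (A : 'End(V)) : 'M[K]_n :=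
  \matrix_(i < n, j < n) coord e i (A e`_j).

Definition is_diagonal n (M : 'M[K]_n) : Prop :=
  forall i j : 'I_n, i != j -> M i j = 0.

Definition irred_tridiag n (M : 'M[K]_n) : Prop :=
  (forall i j : 'I_n, ((i : nat).+1 < j)%N \/ ((j : nat).+1 < i)%N -> M i j = 0)
  /\ (forall i j : 'I_n, (i : nat).+1 = j -> M i j != 0 /\ M j i != 0).

Definition LeonardPair (A As : 'End(V)) : Prop :=
  (0 < \dim {:V})%N /\
  (exists n (e : n.-tuple V), basis_of fullv e /\
      is_diagonal (mat_of e A) /\ irred_tridiag (mat_of e As)) /\
  (exists n (e : n.-tuple V), basis_of fullv e /\
      is_diagonal (mat_of e As) /\ irred_tridiag (mat_of e A)).

Definition almost_bipartite (A As : 'End(V)) : Prop :=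
  LeonardPair A As /\
  exists n (e : n.-tuple V), basis_of fullv e /\
    is_diagonal (mat_of e As) /\ irred_tridiag (mat_of e A) /\
    (forall i : 'I_n, ((i : nat).+1 < n)%N -> mat_of e A i i = 0).

Definition dual_almost_bipartite (A As : 'End(V)) : Prop :=
  almost_bipartite As A.

End LP.

Section Data.
Variable R : realFieldType.

Definition poch (x : R) (i : nat) : R := \prod_(k < i) (x + k%:R).

Variables (d : nat) (r s : R).

Definition theta (i : nat) : R := (d - i)%:R * ((d - i)%:R + r + s + 1).
Definition thetas (i : nat) : R := i%:R.

Definition bs (i : nat) : R :=
  if (i < d)%N then
    (d - i)%:R * (i%:R - d%:R - s) * poch (2 * (d - i)%:R + r + s + 2) i
      / poch (2 * (d - i)%:R + r + s) i.+1
  else 0.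

Definition cs (i : nat) : R :=
  if (0 < i)%N && (i <= d)%N then
    i%:R * (i%:R - d%:R - r - 1) * poch ((d - i)%:R + r + s + 1) (d - i)
      / poch ((d - i)%:R + r + s + 2) (d - i).+1
  else 0.

Definition as_ (i : nat) : R := thetas 0 - bs i - cs i.

End Data.

From HB Require Import structures.
From mathcomp Require Import all_boot all_order all_algebra.
From mathcomp Require Import ring lra zify.
Import Order.TTheory GRing.Theory Num.Theory.
Local Open Scope ring_scope.
Set Implicit Arguments. Unset Strict Implicit. Unset Printing Implicit Defensive.

(* For s = -r the nodes are θ_i = y(y+1) with y = d - i, and L^* acts on values at
   the nodes as a second-order difference operator in y.  In the Lagrange basis at the
   nodes, L is diagonal and L^* + (r-d)/2 is irreducible tridiagonal with diagonal
   entries a^*_i + (r-d)/2, which vanish for i < d.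
   For the other basis let N_k = ∏_{l<k} (X - l(l+1)) ([node_poly k]).  Then L^* is
   upper bidiagonal on the N_k: L^* N_{k+1} = (k+1) N_{k+1} + D_k N_k.  Hence the
   triangular combinations u_j = Σ_k α_{jk} N_k with α_{j,k+1} D_k = (j-k) α_{jk}
   ([ucoef], [uvec]) satisfy L^* u_j = j u_j, and X N_k = N_{k+1} + k(k+1) N_k
   makes L act on the u_j by the three-term recurrence of the dual Hahn
   polynomials, whose off-diagonal coefficients are nonzero for -1 < r < 1. *)

Section TridiagMatrices.
Variable K : fieldType.

Definition tridiag_mx n (sub diag sup : nat -> K) : 'M[K]_n :=
  \matrix_(i, j) (sub j * (i == j.+1 :> nat)%:R + diag i * (i == j :> nat)%:R
                  + sup i * (i.+1 == j :> nat)%:R).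
Arguments tridiag_mx n sub diag sup : clear implicits.

Lemma tridiag_mx_diag n (sub diag sup : nat -> K) (i : 'I_n) :
  tridiag_mx n sub diag sup i i = diag i.
Proof.
by rewrite mxE eqxx (gtn_eqF (ltnSn i)) (ltn_eqF (ltnSn i)) !mulr0 mulr1 add0r addr0.
Qed.

Lemma irred_tridiag_mx n (sub diag sup : nat -> K) :
  (forall i, (i.+1 < n)%N -> sub i != 0 /\ sup i != 0) ->
  irred_tridiag (tridiag_mx n sub diag sup).
Proof.
move=> nz; split=> [i j far | i j ij]; rewrite !mxE.
  have -> : (i == j.+1 :> nat) = false by lia.
  have -> : (i == j :> nat) = false by lia.
  have -> : (i.+1 == j :> nat) = false by lia.
  by rewrite !mulr0 !addr0.
have [nzsub nzsup] : sub i != 0 /\ sup i != 0 by apply: nz; rewrite ij.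
rewrite -ij eqxx.
have -> : (i == i.+2 :> nat) = false by lia.
have -> : (i == i.+1 :> nat) = false by lia.
have -> : (i.+1 == i :> nat) = false by lia.
have -> : (i.+2 == i :> nat) = false by lia.
by rewrite !mulr0 !mulr1 !addr0 !add0r.
Qed.

End TridiagMatrices.

Section MatrixOfEndomorphism.
Variables (K : fieldType) (V : vectType K) (n : nat) (e : n.-tuple V).
Hypothesis free_e : free e.

Lemma coord_free_nth (i : 'I_n) k : coord e i e`_k = (k == i :> nat)%:R.
Proof.
case: (ltnP k n) => [kn | nk]; first by rewrite -[k]/(val (Ordinal kn)) coord_free.
by rewrite nth_default ?size_tuple // linear0 gtn_eqF // (leq_trans (ltn_ord i)).
Qed.

Lemma is_diagonal_mat_of_eigen (A : 'End(V)) (lam : nat -> K) :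
  (forall j : 'I_n, A e`_j = lam j *: e`_j) -> is_diagonal (mat_of e A).
Proof.
move=> eig i j ij; rewrite mxE eig linearZ /= coord_free_nth.
by rewrite (_ : (j == i :> nat) = false) ?mulr0 // eq_sym; apply/negbTE.
Qed.

Lemma mat_of_tridiag (A : 'End(V)) (b a c : nat -> K) : c 0%N = 0 ->
    (forall j : 'I_n, A e`_j = b j *: e`_j.+1 + a j *: e`_j + c j *: e`_j.-1) ->
  mat_of e A = tridiag_mx n b a (fun i => c i.+1).
Proof.
move=> c0 act; apply/matrixP => i j; rewrite !mxE act !linearD !linearZ /=.
rewrite !coord_free_nth [j.+1 == i]eq_sym; congr (_ + _ + _).
  by case: eqVneq => [->|]; rewrite ?mulr0.
case: (nat_of_ord j) => [|k] /=; first by rewrite c0 mul0r mulr0.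
by rewrite eqSS eq_sym; case: eqP => [->|]; rewrite ?mulr0.
Qed.

End MatrixOfEndomorphism.

Lemma free_npoly_size (K : fieldType) n (p : n.-tuple {poly_n K}) :
  (forall i : 'I_n, size (p`_i : {poly K}) = i.+1) -> free p.
Proof.
move=> size_p; apply/freeP => a sum_eq0.
have coef_eq0 (k : nat) : \sum_(l < n) a l * (p`_l : {poly K})`_k = 0.
  have := congr1 (fun q : {poly_n K} => (q : {poly K})`_k) sum_eq0.
  rewrite coefn_sum coef0 => sum_coef_eq0; rewrite -[RHS]sum_coef_eq0.
  by apply: eq_bigr => l _; rewrite linearZ coefZ.
suff a_eq0 m (i : 'I_n) : (n - m <= i)%N -> a i = 0 by move=> i; apply: (a_eq0 n); lia.
elim: m i => [|m IH] i im; first by have := ltn_ord i; lia.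
have [/IH //|i_lt] := leqP (n - m) i.
have lead_p : lead_coef (p`_i : {poly K}) = (p`_i : {poly K})`_i by rewrite lead_coefE size_p.
have /eqP := coef_eq0 i; rewrite (bigD1 i) //= big1 ?addr0 => [|l l_neq_i].
  rewrite mulf_eq0 => /orP[/eqP //|].
  by rewrite -lead_p lead_coef_eq0 -size_poly_eq0 size_p.
have [l_lt_i | i_lt_l] := ltnP l i.
  by rewrite nth_default ?mulr0 // size_p.
by rewrite IH ?mul0r //; move: l_neq_i => /eqP /val_eqP /= ?; lia.
Qed.

Section Pochhammer.
Variable R : realFieldType.
Implicit Types (x : R) (n : nat).

Lemma pochS x n : poch x n.+1 = poch x n * (x + n%:R).
Proof. by rewrite /poch big_ord_recr. Qed.

Lemma pochSl x n : poch x n.+1 = x * poch (x + 1) n.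
Proof.
rewrite /poch big_ord_recl addr0; congr (_ * _); apply: eq_bigr => i _.
by rewrite lift0 -natr1 addrA addrAC.
Qed.

Lemma poch_gt0 x n : 0 < x -> 0 < poch x n.
Proof.
move=> x_gt0; apply: prodr_gt0 => i _.
by have : 0 <= i%:R :> R by []; move: x_gt0; lra.
Qed.

Lemma poch_shift2 x n : 0 < x ->
  poch (x + 2) n = poch x n.+1 * (x + n%:R + 1) / (x * (x + 1)).
Proof.
move=> x_gt0; rewrite -[x + n%:R + 1](addrA x) natr1 -pochS !pochSl.
rewrite -[x + 2](_ : x + 1 + 1 = _); last by ring.
by field; apply/andP; split; apply: lt0r_neq0; lra.
Qed.

Lemma poch_shift1 x n : 0 < x ->
  poch (x + 1) n.+1 = poch x n * (x + n%:R) * (x + n%:R + 1) / x.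
Proof.
move=> x_gt0; rewrite -[x + n%:R + 1](addrA x) natr1 -!pochS [poch x _]pochSl.
by field; apply: lt0r_neq0.
Qed.

End Pochhammer.

Section NodeProducts.
Variable R : comNzRingType.

Definition nodeprod (k : nat) (y : R) : R :=
  \prod_(l < k) ((y - l%:R) * (y + l%:R + 1)).

Lemma nodeprod0 y : nodeprod 0 y = 1.
Proof. by rewrite /nodeprod big_ord0. Qed.

Lemma nodeprodS k y : nodeprod k.+1 y = nodeprod k y * ((y - k%:R) * (y + k%:R + 1)).
Proof. by rewrite /nodeprod big_ord_recr. Qed.

Lemma nodeprodS_addr1 k y :
  nodeprod k.+1 (y + 1) = nodeprod k y * ((y + k%:R + 1) * (y + k%:R + 2)).
Proof.
elim: k => [|k IH]; first by rewrite nodeprodS !nodeprod0; ring.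
by rewrite nodeprodS IH nodeprodS -!natr1; ring.
Qed.

Lemma nodeprodS_subr1 k y :
  nodeprod k.+1 (y - 1) = nodeprod k y * ((y - k%:R) * (y - k%:R - 1)).
Proof.
elim: k => [|k IH]; first by rewrite nodeprodS !nodeprod0; ring.
by rewrite nodeprodS IH nodeprodS -!natr1; ring.
Qed.

Lemma nodeprod_nat m k : (m < k)%N -> nodeprod k m%:R = 0.
Proof. by move=> mk; rewrite /nodeprod (bigD1 (Ordinal mk)) //= subrr !mul0r. Qed.

Lemma nodeprodSN1 k : nodeprod k.+1 (-1) = 0.
Proof. by rewrite /nodeprod big_ord_recl addr0 addNr !mulr0 mul0r. Qed.

Lemma mul_nodeprod k y :
  y * (y + 1) * nodeprod k y = nodeprod k.+1 y + k%:R * (k%:R + 1) * nodeprod k y.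
Proof. by rewrite nodeprodS; ring. Qed.

Definition node_poly (k : nat) : {poly R} :=
  \prod_(l < k) ('X - (l%:R * (l%:R + 1))%:P).

Lemma horner_node_poly k y : (node_poly k).[y * (y + 1)] = nodeprod k y.
Proof.
rewrite horner_prod; apply: eq_bigr => l _; rewrite hornerXsubC; ring.
Qed.

Lemma size_node_poly k : size (node_poly k) = k.+1.
Proof. by rewrite size_prod_XsubC /index_enum unlock /= -enumT size_enum_ord. Qed.

Lemma coef_node_poly_deg k : (node_poly k)`_k = 1.
Proof.
have : node_poly k \is monic by exact: monic_prod_XsubC.
by rewrite monicE lead_coefE size_node_poly => /eqP.
Qed.

End NodeProducts.

Section DualHahnCoefficients.
Variables (R : realFieldType) (d : nat) (r : R).
Hypothesis r_gtN1 : -1 < r.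

(* For [s = -r] and [y = d - i] these are [b*_i] and [c*_i] (lemmas [bsE], [csE]). *)
Definition bnode (y : R) : R := (r - y) * (d%:R + y + 1) / (2 * (2 * y + 1)).
Definition cnode (y : R) : R := - ((d%:R - y) * (y + r + 1)) / (2 * (2 * y + 1)).
Definition Dcoef (k : nat) : R := (r + 1 + k%:R) * (k%:R - d%:R) * (k%:R + 1).

Lemma difference_nodeprod k y : 0 <= y ->
  bnode y * (nodeprod k.+1 (y - 1) - nodeprod k.+1 y)
  + cnode y * (nodeprod k.+1 (y + 1) - nodeprod k.+1 y)
  = k.+1%:R * nodeprod k.+1 y + Dcoef k * nodeprod k y.
Proof.
move=> y_ge0; rewrite nodeprodS_subr1 nodeprodS_addr1 nodeprodS /bnode /cnode /Dcoef -natr1.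
by field; apply: lt0r_neq0; lra.
Qed.

Lemma Dcoef_neq0 k : (k < d)%N -> Dcoef k != 0.
Proof.
move=> kd; have k_ge0 : 0 <= k%:R :> R by [].
rewrite /Dcoef !mulf_neq0 ?subr_eq0 ?eqr_nat ?(ltn_eqF kd) //.
all: apply: lt0r_neq0; move: r_gtN1 k_ge0; lra.
Qed.

Definition ucoef (j k : nat) : R := \prod_(l < k) ((j%:R - l%:R) / Dcoef l).

Lemma ucoef0 j : ucoef j 0 = 1.
Proof. by rewrite /ucoef big_ord0. Qed.

Lemma ucoefS j k : ucoef j k.+1 = ucoef j k * ((j%:R - k%:R) / Dcoef k).
Proof. by rewrite /ucoef big_ord_recr. Qed.

Lemma ucoef_eq0 j k : (j < k)%N -> ucoef j k = 0.
Proof. by move=> jk; rewrite /ucoef (bigD1 (Ordinal jk)) //= subrr !mul0r. Qed.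

Lemma ucoef_diag_neq0 k : (k <= d)%N -> ucoef k k != 0.
Proof.
move=> kd; apply/prodf_neq0 => l _.
rewrite mulf_neq0 ?invr_eq0 ?Dcoef_neq0 ?(leq_trans (ltn_ord l)) //.
by rewrite subr_eq0 eqr_nat gtn_eqF.
Qed.

Lemma ucoefSS j k : (k < d)%N -> ucoef j.+1 k.+1 = j.+1%:R * ucoef j k / Dcoef k.
Proof.
elim: k => [|k IH] kd; first by rewrite ucoefS !ucoef0 subr0 mul1r mulr1.
rewrite ucoefS IH ?(ltnW kd) // ucoefS -!natr1.
by field; rewrite Dcoef_neq0 // Dcoef_neq0 // ltnW.
Qed.

Lemma mulr_ucoef j k : j.+1%:R * ucoef j k = ucoef j.+1 k * (j.+1%:R - k%:R).
Proof.
elim: k => [|k IH]; first by rewrite !ucoef0 subr0 mulr1 mul1r.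
by rewrite !ucoefS mulrA IH -!natr1; ring.
Qed.

Definition bL (j : nat) : R := (j%:R + r + 1) * (j%:R - d%:R).
Definition cL (j : nat) : R := j%:R * (j%:R + r - d%:R - 1).
Definition aL (j : nat) : R := - bL j - cL j.

Lemma ucoef_recurrence j k : (k < d)%N ->
  ucoef j k + ucoef j k.+1 * (k.+1%:R * k.+2%:R)
  = bL j * ucoef j.+1 k.+1 + aL j * ucoef j k.+1 + cL j * ucoef j.-1 k.+1.
Proof.
move=> kd.
have cLE : cL j * ucoef j.-1 k.+1
           = (j%:R + r - d%:R - 1) * (ucoef j k.+1 * (j%:R - k.+1%:R)).
  case: j => [|j]; first by rewrite /cL ucoef_eq0 // !(mul0r, mulr0).
  by rewrite /cL -mulr_ucoef; ring.
have Dk_neq0 := Dcoef_neq0 kd.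
rewrite cLE ucoefSS // ucoefS /aL /cL /bL /Dcoef -!natr1.
by field; move: Dk_neq0; rewrite /Dcoef !mulf_eq0 !negb_or => /andP[/andP[-> ->] ->].
Qed.

Lemma bL_d : bL d = 0.
Proof. by rewrite /bL subrr mulr0. Qed.

Lemma bL_neq0 j : (j < d)%N -> bL j != 0.
Proof.
move=> jd; have j_ge0 : 0 <= j%:R :> R by [].
rewrite /bL mulf_neq0 ?subr_eq0 ?eqr_nat ?(ltn_eqF jd) //.
by apply: lt0r_neq0; move: r_gtN1 j_ge0; lra.
Qed.

Lemma cL0 : cL 0 = 0.
Proof. by rewrite /cL mul0r. Qed.

Hypothesis r_lt1 : r < 1.

Lemma cL_neq0 j : (0 < j)%N -> (j <= d)%N -> cL j != 0.
Proof.
move=> j_gt0 jd; have jd' : j%:R <= d%:R :> R by rewrite ler_nat.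
by rewrite /cL mulf_neq0 ?pnatr_eq0 -?lt0n //; apply: ltr0_neq0; move: r_lt1 jd'; lra.
Qed.

End DualHahnCoefficients.

Section NodesAtZeroSum.
Variables (R : realFieldType) (d : nat) (r s : R).
Hypothesis r_plus_s : r + s = 0.

Lemma s_eqNr : s = - r.
Proof. by apply/eqP; rewrite -addr_eq0 addrC r_plus_s. Qed.

Lemma thetaE t : theta d r s t = (d - t)%:R * ((d - t)%:R + 1).
Proof. by rewrite /theta -(addrA _ r s) r_plus_s addr0. Qed.

Lemma r_lt1 : -1 < s -> r < 1.
Proof. by rewrite s_eqNr; lra. Qed.

Lemma theta_ge0 t : 0 <= theta d r s t.
Proof. by rewrite thetaE mulr_ge0 // addr_ge0. Qed.

Lemma theta_inj i j : (i <= d)%N -> (j <= d)%N -> theta d r s i = theta d r s j -> i = j.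
Proof.
move=> id jd; rewrite !thetaE => /eqP.
rewrite -subr_eq0 (_ : _ - _ = ((d - i)%:R - (d - j)%:R) * ((d - i)%:R + (d - j)%:R + 1)).
  have pos : 0 < (d - i)%:R + (d - j)%:R + 1 :> R by rewrite -natrD natr1 ltr0n.
  by rewrite mulf_eq0 (gt_eqF pos) orbF subr_eq0 eqr_nat => /eqP; lia.
by ring.
Qed.

Lemma bs_d : bs d r s d = 0.
Proof. by rewrite /bs ltnn. Qed.

Lemma bsE i : (i < d)%N -> bs d r s i = bnode d r (d - i)%:R.
Proof.
move=> id; rewrite /bs id s_eqNr addrK.
have iE : i%:R = d%:R - (d - i)%:R :> R by rewrite natrB ?(ltnW id) // opprB addrC subrK.
have y_ge1 : 1 <= (d - i)%:R :> R by rewrite ler1n subn_gt0.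
have p_gt0 : 0 < poch (2 * (d - i)%:R : R) i.+1 by apply: poch_gt0; lra.
rewrite poch_shift2 ?iE /bnode; last by lra.
move: (d - i)%:R y_ge1 p_gt0 => y y_ge1 p_gt0.
by field; rewrite !lt0r_neq0 //; move: y_ge1; lra.
Qed.

Lemma csE i : (i <= d)%N -> cs d r s i = cnode d r (d - i)%:R.
Proof.
case: i => [|i] id; first by rewrite /cs /cnode subn0 subrr !mul0r oppr0 mul0r.
rewrite /cs id /= s_eqNr !addrK.
have iE : i.+1%:R = d%:R - (d - i.+1)%:R :> R by rewrite natrB // opprB addrC subrK.
move: (d - i.+1)%N iE => n iE.
have n_ge0 : 0 <= n%:R :> R by [].
have p_gt0 : 0 < poch (n%:R + 1 : R) n by apply: poch_gt0; lra.
rewrite -[n%:R + 2](_ : n%:R + 1 + 1 = _); last by ring.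
rewrite poch_shift1 ?iE /cnode; last by lra.
by field; rewrite !lt0r_neq0 //; move: n_ge0; lra.
Qed.

Lemma Ls_nodeprod i k : (i <= d)%N ->
  bs d r s i * nodeprod k.+1 (d - i.+1)%:R + as_ d r s i * nodeprod k.+1 (d - i)%:R
  + cs d r s i * nodeprod k.+1 (d - i.-1)%:R
  = k.+1%:R * nodeprod k.+1 (d - i)%:R + Dcoef d r k * nodeprod k (d - i)%:R.
Proof.
move=> id; rewrite -(difference_nodeprod _ _ k (ler0n _ (d - i))).
have b_term : bs d r s i * (nodeprod k.+1 (d - i.+1)%:R - nodeprod k.+1 (d - i)%:R)
    = bnode d r (d - i)%:R * (nodeprod k.+1 ((d - i)%:R - 1) - nodeprod k.+1 (d - i)%:R).
  have [lt_id | ->] : (i < d)%N \/ i = d by lia.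
    rewrite bsE // (_ : (d - i)%N = (d - i.+1).+1); last by lia.
    by rewrite -natr1 addrK.
  by rewrite bs_d mul0r subnn sub0r nodeprodSN1 (@nodeprod_nat _ 0) // subrr mulr0.
have c_term : cs d r s i * (nodeprod k.+1 (d - i.-1)%:R - nodeprod k.+1 (d - i)%:R)
    = cnode d r (d - i)%:R * (nodeprod k.+1 ((d - i)%:R + 1) - nodeprod k.+1 (d - i)%:R).
  rewrite csE //; case: i id {b_term} => [|i] id.
    by rewrite /cnode subn0 subrr !(mul0r, oppr0).
  by rewrite /= natr1 subnSK.
transitivity (bs d r s i * (nodeprod k.+1 (d - i.+1)%:R - nodeprod k.+1 (d - i)%:R)
              + cs d r s i * (nodeprod k.+1 (d - i.-1)%:R - nodeprod k.+1 (d - i)%:R)).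
  by rewrite /as_ /thetas; ring.
by rewrite b_term c_term.
Qed.

Lemma bs_neq0 i : r < 1 -> (i < d)%N -> bs d r s i != 0.
Proof.
move=> r_lt1 id; rewrite bsE // /bnode.
have : 1 <= (d - i)%:R :> R by rewrite ler1n subn_gt0.
have : 0 <= d%:R :> R by [].
move: (d - i)%:R => y d_ge0 y_ge1.
rewrite !mulf_neq0 ?invr_eq0 //; [apply: ltr0_neq0 | apply: lt0r_neq0 ..];
  by move: r_lt1 d_ge0 y_ge1; lra.
Qed.

Lemma cs_neq0 i : -1 < r -> (0 < i)%N -> (i <= d)%N -> cs d r s i != 0.
Proof.
move=> r_gtN1 i_gt0 id; rewrite csE // /cnode.
have : d%:R - (d - i)%:R = i%:R :> R by rewrite natrB // opprB addrC subrK.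
have : 1 <= i%:R :> R by rewrite ler1n.
have : 0 <= (d - i)%:R :> R by [].
move: (d - i)%:R i%:R => y x y_ge0 x_ge1 ->.
by rewrite !mulf_neq0 ?invr_eq0 ?oppr_eq0 ?mulf_neq0 // lt0r_neq0 //;
  move: r_gtN1 y_ge0 x_ge1; lra.
Qed.

Lemma as_add_half i : (i < d)%N -> as_ d r s i + (r - d%:R) / 2 = 0.
Proof.
move=> id; rewrite /as_ /thetas (bsE id) (csE (ltnW id)) /bnode /cnode.
have : 0 <= (d - i)%:R :> R by [].
move: (d - i)%:R => y y_ge0.
by field; apply: lt0r_neq0; move: y_ge0; lra.
Qed.

End NodesAtZeroSum.

Section LeonardPairAtZeroSum.
Variables (R : realFieldType) (d : nat) (r s : R).
Hypothesis r_plus_s : r + s = 0.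
Local Notation V := {poly_d.+1 R}.
Local Notation theta := (theta d r s).

(* [lagrange] samples on all of [nat], so the nodes are extended injectively. *)
Definition node (k : nat) : R := if (k <= d)%N then theta k else - k%:R.

Lemma node_inj : injective node.
Proof.
have theta_neq_neg i j : (d < i)%N -> theta j <> - i%:R.
  by move=> di eq_ji; have := theta_ge0 d r_plus_s j; rewrite eq_ji oppr_ge0 lern0; lia.
move=> i j; rewrite /node.
case: (leqP i d) => id; case: (leqP j d) => jd; first exact: theta_inj.
- by move/(theta_neq_neg j i jd).
- by move/esym/(theta_neq_neg i j id).
- by move/oppr_inj/eqP; rewrite eqr_nat => /eqP.
Qed.

Definition lag : (d.+1).-tuple V := lagrange d.+1 node.

Lemma lag_basis : basis_of fullv lag.
Proof. exact: lagrange_full node_inj. Qed.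

Lemma coord_lag (p : V) (i : 'I_d.+1) : coord lag i p = (p : {poly R}).[theta i].
Proof.
rewrite lagrange_coords //; last exact: node_inj.
by rewrite /node -ltnS ltn_ord.
Qed.

Lemma lag_theta (j : 'I_d.+1) k : (k <= d)%N -> (lag`_j : {poly R}).[theta k] = (k == j)%:R.
Proof.
move=> kd; have -> : theta k = node (Ordinal (kd : k < d.+1)%N) by rewrite /node kd.
by rewrite nth_lagrange (lagrange_sample _ node_inj) // eq_sym.
Qed.

Lemma npoly_eq_at_nodes (p q : V) :
  (forall i : 'I_d.+1, (p : {poly R}).[theta i] = (q : {poly R}).[theta i]) -> p = q.
Proof.
move=> eq_pq; rewrite (coord_basis lag_basis (memvf p)) (coord_basis lag_basis (memvf q)).
by apply: eq_bigr => i _; rewrite !coord_lag eq_pq.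
Qed.

Variables (L Ls : 'End(V)).
Hypothesis L_at_nodes : forall (f : V) (i : 'I_d.+1),
  (L f : {poly R}).[theta i] = theta i * (f : {poly R}).[theta i].
Hypothesis Ls_at_nodes : forall (f : V) (i : 'I_d.+1),
  (Ls f : {poly R}).[theta i] =
    bs d r s i * (f : {poly R}).[theta i.+1] + as_ d r s i * (f : {poly R}).[theta i]
    + cs d r s i * (f : {poly R}).[theta i.-1].

Lemma L_lag (j : 'I_d.+1) : L lag`_j = theta j *: lag`_j.
Proof.
apply: npoly_eq_at_nodes => i; rewrite L_at_nodes linearZ hornerZ (lag_theta _ (ltn_ord i)).
by case: eqVneq => [->|_]; rewrite ?mulr0.
Qed.

Lemma mat_of_lag_shift (c : R) :
  mat_of lag (Ls + c *: \1%VF)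
  = tridiag_mx d.+1 (fun j => cs d r s j.+1) (fun i => as_ d r s i + c) (bs d r s).
Proof.
apply/matrixP => i j; have id : (i <= d)%N by rewrite -ltnS.
rewrite !mxE coord_lag add_lfunE scale_lfunE id_lfunE.
rewrite linearD linearZ /= hornerD hornerZ Ls_at_nodes (lag_theta _ id).
(* Truncated subtraction gives [theta d.+1 = theta d]: harmless, as [bs d = 0]. *)
have -> : bs d r s i * (lag`_j : {poly R}).[theta i.+1]
          = bs d r s i * (i.+1 == j :> nat)%:R.
  have [lt_id | ->] : (i < d)%N \/ (i : nat) = d by lia.
    by rewrite lag_theta.
  by rewrite bs_d !mul0r.
have -> : cs d r s i * (lag`_j : {poly R}).[theta i.-1]
          = cs d r s j.+1 * (i == j.+1 :> nat)%:R.
  rewrite (lag_theta _ (leq_trans (leq_pred i) id)) {id}.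
  case: (nat_of_ord i) => [|k] /=; first by rewrite /cs /= mul0r mulr0.
  by rewrite eqSS /=; case: eqP => [->|]; rewrite ?mulr0.
by ring.
Qed.

Hypothesis r_gtN1 : -1 < r.

Definition uvec (j : nat) : V :=
  npolyp d.+1 (\sum_(k < d.+1) ucoef d r j k *: node_poly R k).

Lemma uvecE j : (uvec j : {poly R}) = \sum_(k < d.+1) ucoef d r j k *: node_poly R k.
Proof.
apply: npolypK; apply: (leq_trans (size_sum _ _ _)); apply/bigmax_leqP => k _.
by rewrite (leq_trans (size_scale_leq _ _)) // size_node_poly.
Qed.

Lemma horner_uvec j t :
  (uvec j : {poly R}).[theta t] = \sum_(k < d.+1) ucoef d r j k * nodeprod k (d - t)%:R.
Proof.
rewrite uvecE horner_sum; apply: eq_bigr => k _.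
by rewrite hornerZ (thetaE d r_plus_s) horner_node_poly.
Qed.

Lemma size_uvec j : (j <= d)%N -> size (uvec j : {poly R}) = j.+1.
Proof.
move=> jd; apply/anti_leq/andP; split.
  apply/leq_sizeP => m jm; rewrite uvecE coef_sum big1 // => k _; rewrite coefZ.
  have [kj | jk] := leqP k j; last by rewrite ucoef_eq0 ?mul0r.
  by rewrite nth_default ?mulr0 // size_node_poly (leq_ltn_trans kj).
rewrite ltnNge; apply/negP => /leq_sizeP/(_ j (leqnn j))/eqP; apply/negP.
rewrite uvecE coef_sum (bigD1 (Ordinal (jd : j < d.+1)%N)) //= big1 => [|k k_neq_j].
  by rewrite coefZ coef_node_poly_deg mulr1 addr0 ucoef_diag_neq0.
have [kj | jk] := ltnP k j; last first.
  by rewrite coefZ ucoef_eq0 ?mul0r // ltn_neqAle jk andbT eq_sym.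
by rewrite coefZ nth_default ?mulr0 // size_node_poly.
Qed.

Lemma L_uvec j :
  L (uvec j) = bL d r j *: uvec j.+1 + aL d r j *: uvec j + cL d r j *: uvec j.-1.
Proof.
apply: npoly_eq_at_nodes => i.
rewrite L_at_nodes !linearD !linearZ /= !hornerD !hornerZ !horner_uvec (thetaE d r_plus_s).
have : (d - i < d.+1)%N by rewrite ltnS leq_subr.
move: (d - i)%N => m md; set y := m%:R.
transitivity (\sum_(k < d.+1) ucoef d r j k * nodeprod k.+1 y
              + \sum_(k < d.+1) ucoef d r j k * (k%:R * (k%:R + 1)) * nodeprod k y).
  by rewrite mulr_sumr -big_split; apply: eq_bigr => k _ /=; rewrite mulrCA mul_nodeprod; ring.
rewrite big_ord_recr /= nodeprod_nat // mulr0 addr0 [X in _ + X]big_ord_recl /=.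
rewrite mulr0n mul0r mulr0 mul0r add0r.
rewrite !mulr_sumr -!big_split big_ord_recl /= !ucoef0 nodeprod0 !mulr1.
rewrite (_ : bL d r j + aL d r j + cL d r j = 0) ?add0r; last by rewrite /aL; ring.
apply: eq_bigr => k _; rewrite /bump /= natr1.
transitivity ((ucoef d r j k + ucoef d r j k.+1 * (k.+1%:R * k.+2%:R)) * nodeprod k.+1 y).
  by ring.
by rewrite ucoef_recurrence //; ring.
Qed.

Lemma Ls_uvec j : (j <= d)%N -> Ls (uvec j) = j%:R *: uvec j.
Proof.
move=> jd; apply: npoly_eq_at_nodes => i; have id : (i <= d)%N by rewrite -ltnS.
rewrite Ls_at_nodes linearZ hornerZ !horner_uvec.
transitivity (\sum_(k < d.+1) ucoef d r j k * (bs d r s i * nodeprod k (d - i.+1)%:R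
   + as_ d r s i * nodeprod k (d - i)%:R + cs d r s i * nodeprod k (d - i.-1)%:R)).
  by rewrite !mulr_sumr -!big_split; apply: eq_bigr => k _ /=; ring.
rewrite big_ord_recl /= !nodeprod0.
rewrite !mulr1 (_ : bs d r s i + as_ d r s i + cs d r s i = 0) ?mulr0 ?add0r; last first.
  by rewrite /as_ /thetas; ring.
under eq_bigr => k _ do rewrite /bump /= (Ls_nodeprod r_plus_s k id).
set y := (d - i)%:R.
transitivity (\sum_(k < d) ucoef d r j k.+1 * k.+1%:R * nodeprod k.+1 y
              + \sum_(k < d) ucoef d r j k * (j%:R - k%:R) * nodeprod k y).
  rewrite -big_split; apply: eq_bigr => k _ /=; rewrite ucoefS.
  by field; apply: Dcoef_neq0.
transitivity (\sum_(k < d.+1) k%:R * ucoef d r j k * nodeprod k y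
              + \sum_(k < d.+1) (j%:R - k%:R) * ucoef d r j k * nodeprod k y).
  rewrite big_ord_recl big_ord_recr /= !mul0r add0r.
  have -> : (j%:R - d%:R) * ucoef d r j d = 0.
    have [-> | jd'] := eqVneq j d; first by rewrite subrr mul0r.
    by rewrite ucoef_eq0 ?mulr0 // ltn_neqAle jd' jd.
  by rewrite mul0r addr0; congr (_ + _); apply: eq_bigr => k _; rewrite /bump /=; ring.
by rewrite mulr_sumr -big_split; apply: eq_bigr => k _ /=; ring.
Qed.

Definition ubasis : (d.+1).-tuple V := [tuple uvec i | i < d.+1].

Lemma nth_ubasis k : (k < d.+1)%N -> ubasis`_k = uvec k.
Proof. by move=> kd; rewrite -[k]/(val (Ordinal kd)) -tnth_nth tnth_mktuple. Qed.

Lemma ubasis_basis : basis_of fullv ubasis.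
Proof.
rewrite basisEfree size_tuple dim_polyn subvf leqnn !andbT.
by apply: free_npoly_size => i; rewrite nth_ubasis // size_uvec // -ltnS.
Qed.

Lemma L_ubasis (j : 'I_d.+1) : L ubasis`_j
  = bL d r j *: ubasis`_j.+1 + aL d r j *: ubasis`_j + cL d r j *: ubasis`_j.-1.
Proof.
have jd := ltn_ord j.
rewrite (nth_ubasis jd) (nth_ubasis (leq_ltn_trans (leq_pred j) jd)) L_uvec.
have [lt_jd | ->] : (j < d)%N \/ (j : nat) = d by lia.
  by rewrite nth_ubasis.
by rewrite bL_d nth_default ?size_tuple // !scale0r.
Qed.

Lemma shift_Ls_ubasis (c : R) (j : 'I_d.+1) :
  (Ls + c *: \1%VF) ubasis`_j = (j%:R + c) *: ubasis`_j.
Proof.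
rewrite add_lfunE scale_lfunE id_lfunE scalerDl nth_ubasis //.
by rewrite Ls_uvec // -ltnS.
Qed.

End LeonardPairAtZeroSum.

Theorem corollary4p1 (R : realFieldType) (d : nat) (r s : R)
  (hr : -1 < r) (hs : -1 < s) (hr0 : r != 0) (hrs : r + s = 0)
  (L Ls : 'End({poly_d.+1 R}))
  (HL : forall (f : {poly_d.+1 R}) (i : 'I_d.+1),
      (L f : {poly R}).[theta d r s i] = theta d r s i * (f : {poly R}).[theta d r s i])
  (HLs : forall (f : {poly_d.+1 R}) (i : 'I_d.+1),
      (Ls f : {poly R}).[theta d r s i] =
        bs d r s i * (f : {poly R}).[theta d r s i.+1]
        + as_ d r s i * (f : {poly R}).[theta d r s i]
        + cs d r s i * (f : {poly R}).[theta d r s i.-1]) :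
  dual_almost_bipartite L (Ls + ((r - d%:R) / 2) *: \1%VF).
Proof.
have r_lt1 := r_lt1 hrs hs.
set A := Ls + _ *: \1%VF.
have lag_basis := lag_basis d hrs.
have ubasis_basis := ubasis_basis d hr.
have lag_A : mat_of (lag d r s) A = _ := mat_of_lag_shift hrs HLs ((r - d%:R) / 2).
have lag_A_irr : irred_tridiag (mat_of (lag d r s) A).
  by rewrite lag_A; apply: irred_tridiag_mx => i lt_id; rewrite cs_neq0 ?bs_neq0.
have ubasis_L_irr : irred_tridiag (mat_of (ubasis d r) L).
  rewrite (mat_of_tridiag (basis_free ubasis_basis) (cL0 d r) (L_ubasis hrs HL hr)).
  by apply: irred_tridiag_mx => i lt_id; rewrite bL_neq0 ?cL_neq0.
have lag_L_diag := is_diagonal_mat_of_eigen (basis_free lag_basis) (L_lag hrs HL).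
have ubasis_A_diag := is_diagonal_mat_of_eigen (basis_free ubasis_basis)
  (lam := fun j => j%:R + (r - d%:R) / 2) (shift_Ls_ubasis hrs HLs hr _).
split; [split; [by rewrite dim_polyn | split] |].
- by exists d.+1, (ubasis d r).
- by exists d.+1, (lag d r s).
- exists d.+1, (lag d r s); do 3!split => //.
  by move=> i lt_id; rewrite lag_A tridiag_mx_diag as_add_half.
Qed.
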